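(* Let $\omega\in\mathbb{H}$, and let $g\in\mathrm{PSL}_2(\mathbb{Z})$ be such that $g^{-1}\cdot\omega\in D_0+n$ for some $n\in\mathbb{Z}$. Assume $g\cdot\infty\neq\infty$ and write $g\cdot\infty=p/q$ in lowest terms with $q>0$. Let $\delta$ be the diameter of the (Euclidean) circle in the upper half-plane that is tangent to the real axis at $p/q$ and passes through $\omega$. Then $f(\omega)=\delta\,q^2$.
   Context: $\mathbb{H}=\{\omega\in\mathbb{C}:\mathrm{Im}(\omega)>0\}$. For $\omega\in\mathbb{H}$, $d(\omega)=\min\{|\alpha+\beta\omega| : \alpha,\beta\in\mathbb{Z},\ (\alpha,\beta)\neq(0,0)\}$ and $f(\omega)=d(\omega)^2/\mathrm{Im}(\omega)$. $\mathrm{PSL}_2(\mathbb{Z})$ acts on $\mathbb{H}\cup\mathbb{R}\cup\{\infty\}$ by $\begin{pmatrix}a&b\\c&d\end{pmatrix}\cdot\omega=\frac{a\omega+b}{c\omega+d}$, with $g\cdot\infty=a/c$ if $c\ne0$ and $g\cdot\infty=\infty$ if $c=0$. $D_0=\{\omega\in\mathbb{C}: -1/2\le\mathrm{Re}(\omega)\le1/2,\ |\omega|\ge1\}$ and $D_0+n=\{\zeta+n:\zeta\in D_0\}$. *)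

From Stdlib Require Import Reals ZArith.
From Coquelicot Require Import Coquelicot.
Open Scope R_scope.

Definition in_H (w : C) : Prop := 0 < Im w.

(* d(w) = min { |alpha + beta w| : (alpha,beta) in Z^2 \ {(0,0)} },
   written as the infimum of that set (the minimum is attained). *)
Definition lattice_norms (w : C) (r : R) : Prop :=
  exists alpha beta : Z, (alpha, beta) <> (0%Z, 0%Z) /\
    r = Cmod (RtoC (IZR alpha) + RtoC (IZR beta) * w)%C.

Definition d_fun (w : C) : R := real (Glb_Rbar (lattice_norms w)).

Definition f_fun (w : C) : R := (d_fun w) ^ 2 / Im w.

(* An element of PSL_2(Z), represented by an integer matrix of determinant 1
   (the action does not depend on the choice of sign). *)
Record SL2Z := mkSL2Z {
  ga : Z; gb : Z; gc : Z; gd : Z;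
  gdet : (ga * gd - gb * gc)%Z = 1%Z }.

Definition act (g : SL2Z) (w : C) : C :=
  ((RtoC (IZR (ga g)) * w + RtoC (IZR (gb g))) /
   (RtoC (IZR (gc g)) * w + RtoC (IZR (gd g))))%C.

Lemma inv_det (g : SL2Z) : (gd g * ga g - (- gb g) * (- gc g))%Z = 1%Z.
Proof. destruct g as [a b c d h]; simpl; rewrite <- h; ring. Qed.

Definition ginv (g : SL2Z) : SL2Z :=
  mkSL2Z (gd g) (- gb g) (- gc g) (ga g) (inv_det g).

(* Action on infinity: None stands for infinity, Some x for the real x. *)
Definition act_infty (g : SL2Z) : option R :=
  if Z.eqb (gc g) 0 then None else Some (IZR (ga g) / IZR (gc g)).

Definition in_D0 (z : C) : Prop :=
  -1/2 <= Re z <= 1/2 /\ 1 <= Cmod z.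

Definition in_D0_shift (n : Z) (z : C) : Prop :=
  in_D0 (z - RtoC (IZR n))%C.

(* Write z = g^-1 w = (d w - b) / (a - c w).  The unimodular change of
   coordinates (al, be) |-> (al d + be b, al c + be a) gives
   al + be w = (m + k z) (a - c w), and |m + k z| >= 1 for every nonzero
   (m, k) because z lies in a translate of D_0, with equality for (m, k) = (1, 0).
   Hence d(w) = |a - c w| = |c| |w - p/q|, and |c| = q since a/c and p/q are
   both reduced.  Finally |w - p/q|^2 = 2 r Im w says that w lies on the circle
   of radius r tangent to the real axis at p/q. *)
From Stdlib Require Import Reals ZArith Lra Lia Psatz.
From Coquelicot Require Import Coquelicot.
Open Scope R_scope.

Lemma sqr_sub_abs_mul_add_sqr_ge1 (m k : Z) :
  (m, k) <> (0%Z, 0%Z) -> (1 <= m * m - Z.abs (m * k) + k * k)%Z.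
Proof.
  intros Hmk.
  destruct (Z.eq_dec m 0) as [->|Hm]; destruct (Z.eq_dec k 0) as [->|Hk].
  - now elim Hmk.
  - simpl; nia.
  - rewrite Z.mul_0_r; simpl; nia.
  - destruct (Z.abs_spec (m * k)) as [[? ->]|[? ->]]; nia.
Qed.

Lemma Cmod_ge1_iff (v : C) : 1 <= Cmod v <-> 1 <= Re v ^ 2 + Im v ^ 2.
Proof.
  split; intros Hv.
  - rewrite <- Cmod2_alt, <- (pow1 2); apply pow_incr; lra.
  - unfold Cmod; rewrite <- sqrt_1; exact (sqrt_le_1_alt _ _ Hv).
Qed.

Lemma lattice_norm_D0_ge1 (m k : Z) (z : C) :
  (m, k) <> (0%Z, 0%Z) -> in_D0 z ->
  1 <= Cmod (RtoC (IZR m) + RtoC (IZR k) * z).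
Proof.
  intros Hmk [Hre Hz%Cmod_ge1_iff].
  assert (Hint := sqr_sub_abs_mul_add_sqr_ge1 m k Hmk).
  apply IZR_le in Hint.
  rewrite plus_IZR, minus_IZR, !mult_IZR, abs_IZR, mult_IZR in Hint.
  assert (Hcross : - Rabs (IZR m * IZR k) <= 2 * (IZR m * IZR k) * Re z).
  { destruct (Rle_or_lt 0 (IZR m * IZR k)).
    - rewrite Rabs_right by lra; nra.
    - rewrite Rabs_left by lra; nra. }
  (* |m + k z|^2 = m^2 + 2 m k Re z + k^2 |z|^2 >= m^2 - |m k| + k^2 *)
  apply Cmod_ge1_iff.
  destruct z as [x y]; unfold Re, Im in *; simpl in *.
  nra.
Qed.

Lemma lattice_norm_D0_shift_ge1 (n m k : Z) (z : C) :
  (m, k) <> (0%Z, 0%Z) -> in_D0_shift n z ->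
  1 <= Cmod (RtoC (IZR m) + RtoC (IZR k) * z).
Proof.
  intros Hmk Hz.
  replace (RtoC (IZR m) + RtoC (IZR k) * z)%C
    with (RtoC (IZR (m + k * n)) + RtoC (IZR k) * (z - RtoC (IZR n)))%C
    by (rewrite plus_IZR, mult_IZR, RtoC_plus, RtoC_mult; ring).
  apply lattice_norm_D0_ge1; [|exact Hz].
  intros Heq; injection Heq as Hm Hk; subst k; apply Hmk; f_equal; lia.
Qed.

Lemma ginv_denom_neq0 (g : SL2Z) (w : C) :
  in_H w -> (RtoC (IZR (ga g)) - RtoC (IZR (gc g)) * w)%C <> 0%C.
Proof.
  destruct g as [a b c d hdet], w as [x y]; unfold in_H, Im; simpl.
  intros Hy Heq.
  assert (Hre := f_equal fst Heq); assert (Him := f_equal snd Heq); simpl in Hre, Him.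
  assert (Hc : IZR c = 0) by nra.
  assert (Ha : IZR a = 0) by (rewrite Hc in Hre; lra).
  apply eq_IZR_R0 in Hc, Ha; subst a c; lia.
Qed.

Lemma act_ginv_mul_denom (g : SL2Z) (w : C) :
  (RtoC (IZR (ga g)) - RtoC (IZR (gc g)) * w)%C <> 0%C ->
  (act (ginv g) w * (RtoC (IZR (ga g)) - RtoC (IZR (gc g)) * w)
   = RtoC (IZR (gd g)) * w - RtoC (IZR (gb g)))%C.
Proof.
  intros He; unfold act, ginv; simpl; rewrite !opp_IZR, !RtoC_opp.
  field; intros H; apply He; rewrite <- H; ring.
Qed.

Lemma lattice_factor_ginv (g : SL2Z) (w : C) (al be : Z) :
  (RtoC (IZR (ga g)) - RtoC (IZR (gc g)) * w)%C <> 0%C ->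
  (RtoC (IZR al) + RtoC (IZR be) * w
   = (RtoC (IZR (al * gd g + be * gb g))
      + RtoC (IZR (al * gc g + be * ga g)) * act (ginv g) w)
     * (RtoC (IZR (ga g)) - RtoC (IZR (gc g)) * w))%C.
Proof.
  intros He.
  rewrite Cmult_plus_distr_r, <- Cmult_assoc, act_ginv_mul_denom by exact He.
  destruct g as [a b c d hdet]; simpl.
  assert (Hdet : (RtoC (IZR a) * RtoC (IZR d) - RtoC (IZR b) * RtoC (IZR c))%C = 1%C).
  { rewrite <- !RtoC_mult, <- RtoC_minus, <- !mult_IZR, <- minus_IZR, hdet; reflexivity. }
  rewrite !plus_IZR, !mult_IZR, !RtoC_plus, !RtoC_mult.
  transitivity ((RtoC (IZR al) + RtoC (IZR be) * w)
                * (RtoC (IZR a) * RtoC (IZR d) - RtoC (IZR b) * RtoC (IZR c)))%C;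
    [rewrite Hdet|]; ring.
Qed.

Lemma SL2Z_coords_neq0 (g : SL2Z) (al be : Z) :
  (al, be) <> (0%Z, 0%Z) ->
  ((al * gd g + be * gb g)%Z, (al * gc g + be * ga g)%Z) <> (0%Z, 0%Z).
Proof.
  destruct g as [a b c d hdet]; simpl; intros Hne Heq; injection Heq as Hm Hk.
  apply Hne.
  assert (Hal : al = (a * (al * d + be * b) - b * (al * c + be * a))%Z)
    by (rewrite <- (Z.mul_1_r al) at 1; rewrite <- hdet; ring).
  assert (Hbe : be = (d * (al * c + be * a) - c * (al * d + be * b))%Z)
    by (rewrite <- (Z.mul_1_r be) at 1; rewrite <- hdet; ring).
  rewrite Hm, Hk in Hal, Hbe; f_equal; lia.
Qed.

Lemma Glb_Rbar_attained (E : R -> Prop) (m : R) :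
  E m -> (forall v, E v -> m <= v) -> Glb_Rbar E = m.
Proof.
  intros Hm Hlow; apply is_glb_Rbar_unique; split.
  - intros v Hv; exact (Hlow v Hv).
  - intros b Hb; exact (Hb m Hm).
Qed.

Lemma d_fun_ginv_D0_shift (g : SL2Z) (w : C) (n : Z) :
  in_H w -> in_D0_shift n (act (ginv g) w) ->
  d_fun w = Cmod (RtoC (IZR (ga g)) - RtoC (IZR (gc g)) * w).
Proof.
  intros Hw Hz.
  assert (He := ginv_denom_neq0 g w Hw).
  set (e := (RtoC (IZR (ga g)) - RtoC (IZR (gc g)) * w)%C) in He |- *.
  unfold d_fun; rewrite (Glb_Rbar_attained _ (Cmod e)); [reflexivity| |].
  - exists (ga g), (- gc g)%Z; split.
    + intros Heq; injection Heq as Ha Hc.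
      assert (Hdet := gdet g); rewrite Ha, <- (Z.opp_involutive (gc g)), Hc in Hdet.
      lia.
    + rewrite opp_IZR, RtoC_opp; unfold e; f_equal; ring.
  - intros v [al [be [Hne ->]]].
    rewrite (lattice_factor_ginv g w al be He), Cmod_mult.
    rewrite <- (Rmult_1_l (Cmod e)) at 1.
    apply Rmult_le_compat_r; [apply Cmod_ge_0|].
    exact (lattice_norm_D0_shift_ge1 n _ _ _ (SL2Z_coords_neq0 g al be Hne) Hz).
Qed.

Lemma coprime_fraction_den_abs (a c p q : Z) :
  (a * q = p * c)%Z -> Z.gcd a c = 1%Z -> Z.gcd p q = 1%Z ->
  Z.abs c = Z.abs q.
Proof.
  intros Hcross Hac Hpq; apply Z.divide_antisym_abs.
  - apply (Z.gauss c a q); [exists p; lia|now rewrite Z.gcd_comm].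
  - apply (Z.gauss q p c); [exists a; lia|now rewrite Z.gcd_comm].
Qed.

Lemma SL2Z_gcd_ac (g : SL2Z) : Z.gcd (ga g) (gc g) = 1%Z.
Proof.
  apply Z.bezout_1_gcd; exists (gd g), (- gb g)%Z.
  rewrite <- (gdet g); ring.
Qed.

Lemma act_infty_Some (g : SL2Z) (t : R) :
  act_infty g = Some t -> IZR (ga g) = IZR (gc g) * t.
Proof.
  unfold act_infty; destruct (Z.eqb_spec (gc g) 0) as [|Hc]; [discriminate|].
  intros Ht; injection Ht as <-.
  field; apply not_0_IZR, Hc.
Qed.

Lemma tangent_circle_Cmod (w : C) (t r : R) :
  Cmod (w - (t, r))%C = r -> Cmod (w - RtoC t)%C ^ 2 = 2 * r * Im w.
Proof.
  intros Hw; apply (f_equal (fun u => u ^ 2)) in Hw.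
  rewrite Cmod2_alt in Hw |- *.
  destruct w as [x y]; unfold Re, Im in *; simpl in *; nra.
Qed.

Theorem proposition3 (w : C) (g : SL2Z) (n p q : Z) (r : R) :
  in_H w ->
  in_D0_shift n (act (ginv g) w) ->
  act_infty g <> None ->
  act_infty g = Some (IZR p / IZR q) ->
  Z.gcd p q = 1%Z ->
  (0 < q)%Z ->
  0 < r ->
  Cmod (w - ((IZR p / IZR q)%R, r))%C = r ->
  f_fun w = (2 * r) * (IZR q) ^ 2.
Proof.
  intros Hw Hz _ Hinf Hpq Hq _ Hcirc.
  assert (Ha := act_infty_Some g _ Hinf).
  assert (Hcq : Rabs (IZR (gc g)) = Rabs (IZR q)).
  { rewrite <- !abs_IZR; f_equal.
    apply (coprime_fraction_den_abs (ga g) (gc g) p q); [|apply SL2Z_gcd_ac|exact Hpq].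
    apply eq_IZR; rewrite !mult_IZR, Ha; field; apply not_0_IZR; lia. }
  assert (Hd : d_fun w = Rabs (IZR q) * Cmod (w - RtoC (IZR p / IZR q))%C).
  { rewrite (d_fun_ginv_D0_shift g w n Hw Hz), Ha, <- Hcq, <- Rabs_Ropp,
      <- Cmod_R, <- Cmod_mult.
    f_equal; rewrite RtoC_opp, RtoC_mult; ring. }
  unfold f_fun; rewrite Hd, Rpow_mult_distr, pow2_abs, (tangent_circle_Cmod _ _ r Hcirc).
  unfold in_H in Hw; field; lra.
Qed.
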